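(* Let $C>0$, $p\in(0,1]$ and $\epsilon\in(0,1)$, and let $$\tau(\epsilon) := 1+\ln(1/\epsilon)+\sqrt{\ln^2(1/\epsilon)+2\ln(1/\epsilon)}.$$ Let $S$ be a finite set of elements, each $i\in S$ having a weight $w_i$ with $0\le w_i\le C$, such that $$\sum_{i\in S} w_i \ \ge\ \frac{\tau(\epsilon)}{p}\cdot C.$$ Suppose each element of $S$ is active independently with probability $p$. Then, with probability at least $1-\epsilon$, the total weight of the active elements of $S$ is at least $C$.
   Context: This is used in a knapsack setting with capacity $C$, where it is a standing assumption of the paper that every individual item fits in the knapsack, i.e. $w_i\le C$ for every item. *)

From HB Require Import structures.
From mathcomp Require Import all_boot all_order all_algebra.
From mathcomp Require Import reals exp.
Set Implicit Arguments. Unset Strict Implicit. Unset Printing Implicit Defensive.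
Import Order.TTheory GRing.Theory Num.Theory.
Local Open Scope ring_scope.

Definition tau (R : realType) (eps : R) : R :=
  1 + ln (eps^-1) + Num.sqrt (ln (eps^-1) ^+ 2 + 2 * ln (eps^-1)).

(* Each element of S = 'I_n is active independently with probability p:
   the set A of active elements has probability p^|A| (1-p)^(n-|A|). *)
Definition prob_active_weight_ge (R : realType) (n : nat) (p : R)
    (w : 'I_n -> R) (C : R) : R :=
  \sum_(A : {set 'I_n} | C <= \sum_(i in A) w i)
     p ^+ #|A| * (1 - p) ^+ (n - #|A|).

From HB Require Import structures.
From mathcomp Require Import all_boot all_order all_algebra.
From mathcomp Require Import reals sequences exp.
From mathcomp Require Import ring lra.
Set Implicit Arguments. Unset Strict Implicit. Unset Printing Implicit Defensive.
Import Order.TTheory GRing.Theory Num.Theory.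
Local Open Scope ring_scope.

(* Normalising by C, the active weight X is a sum of independent variables in
   [0, 1] with mean mu = p * sum_i w_i / C >= tau(eps).  Evaluating the moment
   generating function of -X at t = 1 - 1/mu, with exp(-y) <= 1 - y + y^2/2,
   gives the Chernoff bound P(X < 1) <= exp(-(mu - 1)^2 / (2 mu)), and tau(eps)
   is exactly the mean beyond which this bound drops below eps. *)

Lemma prodD_sum_setC (R : comPzSemiRingType) (I : finType) (f g : I -> R) :
  \prod_i (f i + g i) = \sum_(A : {set I}) \prod_(i in A) f i * \prod_(i in ~: A) g i.
Proof.
rewrite bigA_distr; apply: eq_bigr => A _.
rewrite (bigID (mem A)) /=; congr (_ * _).
- by apply: eq_bigr => i ->.
- by apply: eq_big => [i|i]; rewrite ?inE // => /negbTE ->.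
Qed.

Section ExpTaylor.
Variable R : realType.
Implicit Types x y : R.

Lemma series_exp_coeff_le_expR x n : 0 <= x -> series (exp_coeff x) n <= expR x.
Proof.
move=> x_ge0; apply: nondecreasing_cvgn_le; last exact: is_cvg_series_exp_coeff.
by apply: nondecreasing_series => k _ _; exact: exp_coeff_ge0.
Qed.

Lemma expR_ge_taylor2 x : 0 <= x -> 1 + x + x ^+ 2 / 2 <= expR x.
Proof.
move=> x_ge0; apply: le_trans (series_exp_coeff_le_expR 3 x_ge0).
by rewrite /series /= !big_nat_recr //= big_geq // /exp_coeff /= add0r !divr1.
Qed.

Lemma expRN_le_taylor2 y : 0 <= y -> expR (- y) <= 1 - y + y ^+ 2 / 2.
Proof.
move=> y_ge0; have := expR_ge_taylor2 y_ge0.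
set a := 1 + y + y ^+ 2 / 2 => a_le_exp.
have a_gt0 : 0 < a by rewrite /a; nra.
have : a * (1 - y + y ^+ 2 / 2) = 1 + y ^+ 4 / 4 by rewrite /a; field.
rewrite expRN -(ler_pM2l a_gt0) => ->.
apply: le_trans (_ : 1 <= _); last by rewrite lerDl divr_ge0 ?exprn_ge0.
by rewrite -(mulfV (lt0r_neq0 (expR_gt0 y))) ler_wpM2r ?invr_ge0 ?expR_ge0.
Qed.

End ExpTaylor.

Section ActiveSets.
Variables (R : numDomainType) (n : nat) (p : R).

Definition active_prob (A : {set 'I_n}) : R := p ^+ #|A| * (1 - p) ^+ (n - #|A|).

Lemma active_probE A : active_prob A = \prod_(i in A) p * \prod_(i in ~: A) (1 - p).
Proof.
rewrite !prodr_const; congr (_ * _ ^+ _).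
by rewrite [#|~: A|]cardsCs setCK card_ord.
Qed.

Lemma sum_active_prob_prod (a : 'I_n -> R) :
  \sum_A active_prob A * \prod_(i in A) a i = \prod_i (p * a i + (1 - p)).
Proof.
rewrite prodD_sum_setC; apply: eq_bigr => A _.
by rewrite big_split /= active_probE mulrAC.
Qed.

Lemma sum_active_prob : \sum_A active_prob A = 1.
Proof.
rewrite -[RHS](_ : \prod_(i < n) (p * 1 + (1 - p)) = 1).
  by rewrite -sum_active_prob_prod; apply: eq_bigr => A _; rewrite big1_eq mulr1.
by apply: big1 => i _; rewrite mulr1 subrKC.
Qed.

Lemma active_prob_ge0 A : 0 <= p <= 1 -> 0 <= active_prob A.
Proof. by case/andP=> p_ge0 p_le1; rewrite mulr_ge0 ?exprn_ge0 ?subr_ge0. Qed.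

End ActiveSets.

Lemma bernoulli_mgf_le (R : realType) (p v t : R) :
  0 <= p -> 0 <= v <= 1 -> 0 <= t ->
  p * expR (- t * v) + (1 - p) <= expR (- (p * v * (t - t ^+ 2 / 2))).
Proof.
move=> p_ge0 /andP[v_ge0 v_le1] t_ge0.
apply: le_trans (expR_ge1Dx _).
have tv_ge0 : 0 <= t * v by rewrite mulr_ge0.
have := expRN_le_taylor2 tv_ge0; rewrite -mulNr => exp_le.
have sqr_le : (t * v) ^+ 2 <= t ^+ 2 * v.
  by rewrite exprMn ler_wpM2l ?sqr_ge0 // expr2 ler_piMr.
have := ler_wpM2l p_ge0 exp_le; nra.
Qed.

Section ChernoffLowerTail.
Variables (R : realType) (n : nat) (p : R) (v : 'I_n -> R).
Hypotheses (p_ge0 : 0 <= p) (p_le1 : p <= 1) (v_01 : forall i, 0 <= v i <= 1).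

Local Notation P := (active_prob p).
Local Notation X A := (\sum_(i in A) v i).
Local Notation mu := (p * \sum_i v i).

Lemma lower_tail_le_mgf (t : R) : 0 <= t ->
  \sum_(A : {set 'I_n} | X A < 1) P A <= expR t * \prod_i (p * expR (- t * v i) + (1 - p)).
Proof.
move=> t_ge0.
have P_ge0 (A : {set 'I_n}) : 0 <= P A by apply: active_prob_ge0; rewrite p_ge0.
have mgfE : \sum_A P A * expR (t * (1 - X A)) =
            expR t * \prod_i (p * expR (- t * v i) + (1 - p)).
  rewrite -sum_active_prob_prod mulr_sumr; apply: eq_bigr => A _.
  by rewrite mulrBr mulr1 expRD -mulNr mulr_sumr expR_sum mulrCA.
rewrite -mgfE [leRHS](bigID (fun A : {set 'I_n} => X A < 1)) /= -[leLHS]addr0.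
apply: lerD; last by rewrite sumr_ge0 // => A _; rewrite mulr_ge0 ?expR_ge0.
apply: ler_sum => A X_lt1; rewrite -{1}[P A]mulr1 ler_wpM2l //.
by rewrite -[leLHS]expR0 ler_expR mulr_ge0 // subr_ge0; apply: ltW.
Qed.

Lemma chernoff_lower_tail : 1 <= mu ->
  \sum_(A : {set 'I_n} | X A < 1) P A <= expR (- ((mu - 1) ^+ 2 / (2 * mu))).
Proof.
move=> mu_ge1; have mu_gt0 : 0 < mu by apply: lt_le_trans mu_ge1.
pose t := 1 - mu^-1; pose c := t - t ^+ 2 / 2.
have t_ge0 : 0 <= t by rewrite subr_ge0 invf_le1.
apply: le_trans (lower_tail_le_mgf t_ge0) _.
have mgf_le : \prod_i (p * expR (- t * v i) + (1 - p)) <= expR (- (mu * c)).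
  rewrite mulr_sumr mulr_suml -sumrN expR_sum; apply: ler_prod => i _.
  rewrite addr_ge0 ?subr_ge0 ?mulr_ge0 ?expR_ge0 //=.
  exact: bernoulli_mgf_le.
apply: le_trans (ler_wpM2l (expR_ge0 t) mgf_le) _.
rewrite -expRD ler_expR le_eqVlt; apply/orP; left; apply/eqP.
by rewrite /c /t; field; rewrite -negb_or -mulf_eq0 mulrC gt_eqF.
Qed.

End ChernoffLowerTail.

Lemma prob_active_weight_geE (R : realType) (n : nat) (p : R) (w : 'I_n -> R) C :
  prob_active_weight_ge p w C =
  1 - \sum_(A : {set 'I_n} | \sum_(i in A) w i < C) active_prob p A.
Proof.
under eq_bigl => A do rewrite ltNge.
rewrite -(sum_active_prob n p).
by rewrite (bigID (fun A : {set 'I_n} => C <= \sum_(i in A) w i)) addrK.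
Qed.

Section Tau.
Variables (R : realType) (eps : R).
Hypothesis eps_01 : 0 < eps < 1.

Let L := ln eps^-1.

Let L_ge0 : 0 <= L.
Proof. by case/andP: eps_01 => eps_gt0 eps_lt1; rewrite ln_ge0 // invf_ge1 // ltW. Qed.

Lemma tau_ge1 : 1 <= tau eps.
Proof. by rewrite /tau -addrA lerDl addr_ge0 ?sqrtr_ge0. Qed.

(* tau eps is the larger root of (mu - 1)^2 = 2 L mu. *)
Lemma expR_chernoff_le_of_tau_le (mu : R) : tau eps <= mu ->
  expR (- ((mu - 1) ^+ 2 / (2 * mu))) <= eps.
Proof.
move=> tau_le; have mu_gt0 : 0 < mu by apply: lt_le_trans ltr01 (le_trans tau_ge1 tau_le).
pose s := Num.sqrt (L ^+ 2 + 2 * L).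
have s_ge0 : 0 <= s by rewrite sqrtr_ge0.
have sE : s ^+ 2 = L ^+ 2 + 2 * L by rewrite sqr_sqrtr // addr_ge0 ?sqr_ge0 ?mulr_ge0.
have s_le : s <= mu - 1 - L by move: tau_le; rewrite /tau -/L -/s; lra.
have : s ^+ 2 <= (mu - 1 - L) ^+ 2 by rewrite ler_sqr ?nnegrE //; lra.
rewrite sE => sqr_le.
have eps_gt0 : 0 < eps by case/andP: eps_01.
rewrite -[leRHS]invrK -[eps^-1]lnK ?posrE ?invr_gt0 // -expRN ler_expR lerN2 -/L.
rewrite ler_pdivlMr ?mulr_gt0 //; nra.
Qed.

End Tau.

Theorem lemma1 (R : realType) (n : nat) (C p eps : R) (w : 'I_n -> R) :
  0 < C -> 0 < p <= 1 -> 0 < eps < 1 ->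
  (forall i, 0 <= w i <= C) ->
  tau eps / p * C <= \sum_(i < n) w i ->
  1 - eps <= prob_active_weight_ge p w C.
Proof.
move=> C_gt0 /andP[p_gt0 p_le1] eps_01 w_0C tau_le_sum.
pose v i := w i / C.
have v_01 i : 0 <= v i <= 1.
  case/andP: (w_0C i) => w_ge0 w_leC.
  by rewrite divr_ge0 ?(ltW C_gt0) //= ler_pdivrMr ?mul1r.
have sum_vE (P : pred 'I_n) : \sum_(i | P i) v i = (\sum_(i | P i) w i) / C.
  by rewrite mulr_suml.
have tau_le : tau eps <= p * \sum_i v i.
  by rewrite sum_vE mulrA ler_pdivlMr // [p * _]mulrC -ler_pdivrMr // mulrAC.
have mu_ge1 : 1 <= p * \sum_i v i := le_trans (tau_ge1 eps_01) tau_le.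
rewrite prob_active_weight_geE lerD2l lerN2.
under eq_bigl => A do rewrite -[C in _ < C]mul1r -ltr_pdivrMr // -sum_vE.
apply: le_trans (chernoff_lower_tail (ltW p_gt0) p_le1 v_01 mu_ge1) _.
exact: expR_chernoff_le_of_tau_le.
Qed.
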